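(* Let $\sigma>0$ and $1<\theta<\infty$. Then: (i) $w_{\sigma,\theta}$ is continuous with compact support $\mathrm{supp}(w_{\sigma,\theta})\subseteq\mathscr{S}_\theta:=[4,4\zeta(\theta)]$; (ii) $\mathscr{P}_\theta$ is countable and $w_{\sigma,\theta}$ is continuously differentiable on $\mathbb{R}\setminus\mathscr{P}_\theta$, so that $w'_{\sigma,\theta}$ exists a.e.; (iii) $w_{\gamma\sigma,\theta}=(w_{\sigma,\theta})^{\gamma-1}w_{\sigma,\theta}$ for all $\gamma>0$; (iv) $0\leq w_{\sigma,\theta}(\xi)\leq 2^{-\sigma\theta}$ for all $\xi\in\mathbb{R}$.
   Context: For $1<\theta<\infty$ let $a_{n,\theta}:=4\sum_{j=1}^{n-1}j^{-\theta}$ for integers $n\geq2$, so $a_{2,\theta}=4$, $a_{n+1,\theta}=a_{n,\theta}+4n^{-\theta}$ and $a_{\infty,\theta}:=\lim_n a_{n,\theta}=4\zeta(\theta)$ ($\zeta$ the Riemann zeta function). For $\sigma>0$ define $w_{\sigma,\theta}:\mathbb{R}\to[0,\infty)$ on each $[a_{n,\theta},a_{n+1,\theta})$, $n\geq2$, by: $w_{\sigma,\theta}(\xi)=(\xi-a_{n,\theta})^\sigma$ if $a_{n,\theta}\leq\xi<a_{n,\theta}+n^{-\theta}$; $=n^{-\theta\sigma}$ if $a_{n,\theta}+n^{-\theta}\leq\xi<a_{n,\theta}+2n^{-\theta}$; $=(a_{n,\theta}+3n^{-\theta}-\xi)^\sigma$ if $a_{n,\theta}+2n^{-\theta}\leq\xi<a_{n,\theta}+3n^{-\theta}$;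 $=0$ if $a_{n,\theta}+3n^{-\theta}\leq\xi<a_{n+1,\theta}$; and $w_{\sigma,\theta}:=0$ on $\mathbb{R}\setminus[a_{2,\theta},a_{\infty,\theta})$. The set of transition points is $\mathscr{P}_\theta:=\{\xi\in[a_{2,\theta},a_{\infty,\theta}) : \xi=a_{n,\theta}+kn^{-\theta}\text{ for some } n\geq2,\ k\in\{0,1,2,3\}\}\cup\{a_{\infty,\theta}\}$. *)

From Stdlib Require Import Reals Lra ClassicalEpsilon.
From Coquelicot Require Import Coquelicot.
Open Scope R_scope.

(* Real power with the convention x^s = 0 for x <= 0 (so 0^sigma = 0). *)
Definition rpow (x s : R) : R := if Rle_dec x 0 then 0 else Rpower x s.

Definition npow (n : nat) (e : R) : R := Rpower (INR n) e.

(* psum theta n = sum_{j=1}^{n-1} j^{-theta} *)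
Fixpoint psum (theta : R) (n : nat) : R :=
  match n with
  | O => 0
  | S m => psum theta m + (if Nat.eqb m 0 then 0 else npow m (- theta))
  end.

Definition a (theta : R) (n : nat) : R := 4 * psum theta n.

Definition zeta (theta : R) : R := Series (fun k => npow (S k) (- theta)).

Definition ainf (theta : R) : R := 4 * zeta theta.

Definition piece (sigma theta : R) (n : nat) (xi : R) : R :=
  let an := a theta n in
  let h := npow n (- theta) in
  if Rlt_dec xi (an + h) then rpow (xi - an) sigma
  else if Rlt_dec xi (an + 2 * h) then npow n (- theta * sigma)
  else if Rlt_dec xi (an + 3 * h) then rpow (an + 3 * h - xi) sigma
  else 0.

Definition nsel (theta xi : R) : nat :=
  epsilon (inhabits O)
    (fun n => (2 <= n)%nat /\ a theta n <= xi < a theta (S n)).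

Definition w (sigma theta : R) (xi : R) : R :=
  if Rle_dec (a theta 2) xi then
    if Rlt_dec xi (ainf theta) then piece sigma theta (nsel theta xi) xi else 0
  else 0.

Definition Ptheta (theta : R) (xi : R) : Prop :=
  (a theta 2 <= xi < ainf theta /\
   exists (n k : nat), (2 <= n)%nat /\ (k <= 3)%nat /\
     xi = a theta n + INR k * npow n (- theta))
  \/ xi = ainf theta.

(* closure of {xi | f xi <> 0} *)
Definition in_support (f : R -> R) (xi : R) : Prop :=
  forall eps : R, 0 < eps -> exists y : R, Rabs (y - xi) < eps /\ f y <> 0.

(* Every piece of [w s th] is [rpow t s] of a trapezoid [t] of height [n^-th] supported on
   [[a_n, a_n + 3 n^-th]], so continuity, the bound [2^-s th] and the identity for the exponent
   [g s] reduce to properties of [rpow], and off the corners of the trapezoids [w] is locally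
   [0], a constant or [(+-(y - c))^s].  The only global issue is continuity at [4 zeta(th)]:
   since [sum j^-th] converges (by comparison with the telescoping sum of [j^(1-th)]), the
   heights [n^-th] of the trapezoids accumulating there tend to [0]. *)

From Stdlib Require Import Reals Lra Lia ClassicalEpsilon.
From Coquelicot Require Import Coquelicot.
Open Scope R_scope.

Lemma npow_gt0 n e : 0 < npow n e.
Proof. apply exp_pos. Qed.

Lemma npow_1 e : npow 1 e = 1.
Proof. unfold npow, Rpower. simpl. rewrite ln_1, Rmult_0_r. apply exp_0. Qed.

Lemma psum_succ th n : (1 <= n)%nat -> psum th (S n) = psum th n + npow n (- th).
Proof. intros Hn. destruct n as [|n]; [lia|]. simpl. ring. Qed.

Lemma a_succ th n : (1 <= n)%nat -> a th (S n) = a th n + 4 * npow n (- th).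
Proof. intros Hn. unfold a. rewrite psum_succ by exact Hn. ring. Qed.

Lemma a_0 th : a th 0 = 0.
Proof. unfold a; simpl; ring. Qed.

Lemma a_1 th : a th 1 = 0.
Proof. unfold a; simpl; ring. Qed.

Lemma a_2 th : a th 2 = 4.
Proof. unfold a; simpl. rewrite npow_1. ring. Qed.

Lemma a_le_succ th n : a th n <= a th (S n).
Proof.
  destruct n as [|n].
  - rewrite a_0, a_1; lra.
  - rewrite (a_succ th (S n)) by lia. pose proof (npow_gt0 (S n) (- th)). lra.
Qed.

Lemma a_mono th n m : (n <= m)%nat -> a th n <= a th m.
Proof. induction 1; [lra|]. eapply Rle_trans; [eassumption|apply a_le_succ]. Qed.

Lemma ln_succ_sub_ln_ge x : 0 < x -> / (x + 1) <= ln (x + 1) - ln x.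
Proof.
  intros Hx. pose proof (exp_ineq1_le (ln x - ln (x + 1))) as Hexp.
  replace (exp (ln x - ln (x + 1))) with (1 - / (x + 1)) in Hexp; [lra|].
  unfold Rminus. rewrite exp_plus, exp_Ropp, !exp_ln by lra. field. lra.
Qed.

(* [k^(1-th) = (k+1)^(1-th) exp((th-1) (ln(k+1) - ln k))] and [exp u >= 1 + u]. *)
Lemma npow_succ_le_diff th k : 1 < th -> (1 <= k)%nat ->
  (th - 1) * npow (S k) (- th) <= npow k (1 - th) - npow (S k) (1 - th).
Proof.
  intros Hth Hk. unfold npow, Rpower. rewrite S_INR.
  assert (Hk1 : 1 <= INR k) by (apply (le_INR 1); exact Hk).
  pose proof (ln_succ_sub_ln_ge (INR k) ltac:(lra)) as Hlog.
  set (u := ln (INR k + 1) - ln (INR k)) in *.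
  set (E := exp ((1 - th) * ln (INR k + 1))).
  assert (HE : 0 < E) by apply exp_pos.
  assert (Hnext : exp (- th * ln (INR k + 1)) = E / (INR k + 1)).
  { replace (- th * ln (INR k + 1)) with ((1 - th) * ln (INR k + 1) + - ln (INR k + 1))
      by ring.
    rewrite exp_plus, exp_Ropp, exp_ln by lra. reflexivity. }
  assert (Hprev : exp ((1 - th) * ln (INR k)) = E * exp ((th - 1) * u)).
  { unfold E, u. rewrite <- exp_plus. f_equal. ring. }
  rewrite Hnext, Hprev.
  pose proof (exp_ineq1_le ((th - 1) * u)) as Hexp.
  assert (Hstep : (th - 1) / (INR k + 1) <= (th - 1) * u).
  { unfold Rdiv. apply Rmult_le_compat_l; lra. }
  replace ((th - 1) * (E / (INR k + 1))) with (E * ((th - 1) / (INR k + 1))) by (field; lra).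
  assert (E * ((th - 1) / (INR k + 1)) <= E * (exp ((th - 1) * u) - 1)).
  { apply Rmult_le_compat_l; lra. }
  lra.
Qed.

Lemma psum_le_telescoped th n : 1 < th -> (1 <= n)%nat ->
  (th - 1) * psum th (S n) <= th - npow n (1 - th).
Proof.
  intros Hth. induction 1 as [|m Hm IH].
  - simpl. rewrite !npow_1. lra.
  - rewrite psum_succ by lia. pose proof (npow_succ_le_diff th m Hth Hm). nra.
Qed.

Lemma psum_le th n : 1 < th -> psum th n <= th / (th - 1).
Proof.
  intros Hth. assert (0 < th / (th - 1)) by (apply Rdiv_lt_0_compat; lra).
  destruct n as [|[|n]]; [simpl; lra|simpl; lra|].
  pose proof (psum_le_telescoped th (S n) Hth ltac:(lia)).
  pose proof (npow_gt0 (S n) (1 - th)).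
  apply Rmult_le_reg_l with (th - 1); [lra|].
  replace ((th - 1) * (th / (th - 1))) with th by (field; lra). lra.
Qed.

Lemma sum_n_zeta_terms th n :
  sum_n (fun k => npow (S k) (- th)) n = psum th (S (S n)).
Proof.
  induction n as [|n IH].
  - rewrite sum_O. simpl. ring.
  - rewrite sum_Sn, IH, (psum_succ th (S (S n))) by lia. reflexivity.
Qed.

Lemma zeta_is_series th : 1 < th -> is_series (fun k => npow (S k) (- th)) (zeta th).
Proof.
  intros Hth.
  assert (Hex : ex_series (fun k => npow (S k) (- th))).
  { apply ex_finite_lim_seq_incr with (th / (th - 1)); intros n;
      rewrite !sum_n_zeta_terms.
    - rewrite (psum_succ th (S (S n))) by lia.
      pose proof (npow_gt0 (S (S n)) (- th)). lra.
    - apply psum_le; exact Hth. }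
  apply Series_correct, Hex.
Qed.

Lemma is_lim_seq_a th : 1 < th -> is_lim_seq (a th) (ainf th).
Proof.
  intros Hth. apply is_lim_seq_incr_n with 2%nat.
  apply is_lim_seq_ext with (fun n => 4 * sum_n (fun k => npow (S k) (- th)) n).
  - intros n. rewrite sum_n_zeta_terms, Nat.add_comm. reflexivity.
  - apply (is_lim_seq_scal_l _ 4 (zeta th)), zeta_is_series, Hth.
Qed.

Lemma a_lt_ainf th n : 1 < th -> a th n < ainf th.
Proof.
  intros Hth.
  pose proof (is_lim_seq_incr_compare _ _ (is_lim_seq_a th Hth) (a_le_succ th) (S (S n)))
    as Hle.
  rewrite (a_succ th (S n)) in Hle by lia.
  pose proof (a_le_succ th n). pose proof (npow_gt0 (S n) (- th)). lra.
Qed.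

Lemma a_exceeds th x : 1 < th -> x < ainf th -> exists N, x < a th N.
Proof.
  intros Hth Hx.
  pose proof (proj2 (is_lim_seq_spec _ _) (is_lim_seq_a th Hth)) as Hlim.
  destruct (Hlim (mkposreal (ainf th - x) ltac:(lra))) as [N HN].
  exists N. specialize (HN N (Nat.le_refl N)). simpl in HN. apply Rabs_def2 in HN. lra.
Qed.

Lemma block_exists th x : 1 < th -> a th 2 <= x < ainf th ->
  exists n, (2 <= n)%nat /\ a th n <= x < a th (S n).
Proof.
  intros Hth [H2 Hinf]. destruct (a_exceeds th x Hth Hinf) as [N HN].
  rewrite a_2 in H2. induction N as [|N IH].
  - rewrite a_0 in HN. lra.
  - destruct (Rlt_le_dec x (a th N)) as [Hlt|Hle]; [now apply IH|].
    destruct N as [|[|N]].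
    + rewrite a_1 in HN. lra.
    + rewrite a_2 in HN. lra.
    + exists (S (S N)). split; [lia|lra].
Qed.

Lemma block_unique th x n m :
  a th n <= x < a th (S n) -> a th m <= x < a th (S m) -> n = m.
Proof.
  intros Hn Hm. destruct (Nat.lt_trichotomy n m) as [H|[H|H]]; auto.
  - pose proof (a_mono th (S n) m H). lra.
  - pose proof (a_mono th (S m) n H). lra.
Qed.

Lemma nsel_spec th x : 1 < th -> a th 2 <= x < ainf th ->
  (2 <= nsel th x)%nat /\ a th (nsel th x) <= x < a th (S (nsel th x)).
Proof. intros Hth Hx. unfold nsel. apply epsilon_spec, block_exists; assumption. Qed.

Lemma w_eq_piece s th x n : 1 < th -> (2 <= n)%nat -> a th n <= x < a th (S n) ->
  w s th x = piece s th n x.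
Proof.
  intros Hth Hn Hx. unfold w.
  pose proof (a_mono th 2 n Hn). pose proof (a_lt_ainf th (S n) Hth).
  destruct (Rle_dec (a th 2) x); [|lra].
  destruct (Rlt_dec x (ainf th)); [|lra].
  destruct (nsel_spec th x Hth ltac:(lra)) as [_ Hsel].
  now rewrite (block_unique th x _ _ Hsel Hx).
Qed.

Lemma w_eq_0 s th x : x < a th 2 \/ ainf th <= x -> w s th x = 0.
Proof.
  intros H. unfold w.
  destruct (Rle_dec (a th 2) x); [|reflexivity].
  destruct (Rlt_dec x (ainf th)); [lra|reflexivity].
Qed.

Lemma rpow_eq_Rpower x s : 0 < x -> rpow x s = Rpower x s.
Proof. intros H. unfold rpow. destruct (Rle_dec x 0); [lra|reflexivity]. Qed.

Lemma rpow_eq_0 x s : x <= 0 -> rpow x s = 0.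
Proof. intros H. unfold rpow. destruct (Rle_dec x 0); [reflexivity|lra]. Qed.

Lemma rpow_ge0 x s : 0 <= rpow x s.
Proof. unfold rpow. destruct (Rle_dec x 0); [lra|left; apply exp_pos]. Qed.

Lemma rpow_le_compat x y s : 0 <= s -> x <= y -> rpow x s <= rpow y s.
Proof.
  intros Hs Hxy. destruct (Rle_lt_dec x 0) as [Hx|Hx].
  - rewrite rpow_eq_0 by exact Hx. apply rpow_ge0.
  - rewrite !rpow_eq_Rpower by lra. apply Rle_Rpower_l; lra.
Qed.

Lemma rpow_lt_root x s eps : 0 < s -> 0 < eps -> x < Rpower eps (/ s) -> rpow x s < eps.
Proof.
  intros Hs Heps Hx. destruct (Rle_lt_dec x 0) as [H0|H0].
  - rewrite rpow_eq_0 by exact H0. exact Heps.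
  - rewrite rpow_eq_Rpower by exact H0.
    replace eps with (Rpower (Rpower eps (/ s)) s) at 1.
    + apply Rlt_Rpower_l; lra.
    + rewrite Rpower_mult, Rinv_l by lra. apply Rpower_1, Heps.
Qed.

Lemma rpow_mul_exponent x s g : rpow x (g * s) = rpow (rpow x s) (g - 1) * rpow x s.
Proof.
  destruct (Rle_lt_dec x 0) as [Hx|Hx].
  - rewrite !(rpow_eq_0 x) by exact Hx. ring.
  - rewrite !(rpow_eq_Rpower x), rpow_eq_Rpower by (try apply exp_pos; exact Hx).
    rewrite Rpower_mult, <- Rpower_plus. f_equal. ring.
Qed.

Lemma rpow_continuous s x : 0 < s -> continuous (fun y => rpow y s) x.
Proof.
  intros Hs. destruct (Rlt_le_dec 0 x) as [Hx|Hx].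
  - apply continuous_ext_loc with (fun y => Rpower y s).
    + apply locally_interval with 0 p_infty; [exact Hx|exact I|].
      intros y Hy _. now rewrite rpow_eq_Rpower.
    + apply (@ex_derive_continuous R_AbsRing R_NormedModule).
      exists (s * Rpower x (s - 1)). apply is_derive_Reals, derivable_pt_lim_power, Hx.
  - apply filterlim_locally. intros eps.
    assert (Hd : 0 < Rpower eps (/ s)) by apply exp_pos.
    exists (mkposreal _ Hd). intros y Hy.
    change (Rabs (y - x) < Rpower eps (/ s)) in Hy.
    change (Rabs (rpow y s - rpow x s) < eps).
    apply Rabs_def2 in Hy.
    rewrite (rpow_eq_0 x) by exact Hx. rewrite Rminus_0_r, Rabs_right by apply Rle_ge, rpow_ge0.
    apply rpow_lt_root; [exact Hs|apply cond_pos|lra].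
Qed.

Definition trapezoid (c h x : R) : R := Rmin (Rmin (x - c) h) (c + 3 * h - x).

Lemma piece_trapezoid s th n x :
  piece s th n x = rpow (trapezoid (a th n) (npow n (- th)) x) s.
Proof.
  unfold piece, trapezoid. set (h := npow n (- th)). set (c := a th n).
  assert (Hh : 0 < h) by apply npow_gt0.
  destruct (Rlt_dec x (c + h)).
  { f_equal. unfold Rmin. repeat destruct Rle_dec; lra. }
  destruct (Rlt_dec x (c + 2 * h)).
  { replace (npow n (- th * s)) with (rpow h s)
      by (rewrite rpow_eq_Rpower by exact Hh; apply Rpower_mult).
    f_equal. unfold Rmin. repeat destruct Rle_dec; lra. }
  destruct (Rlt_dec x (c + 3 * h)).
  { f_equal. unfold Rmin. repeat destruct Rle_dec; lra. }
  symmetry. apply rpow_eq_0. unfold Rmin. repeat destruct Rle_dec; lra.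
Qed.

Lemma piece_le s th n x : 0 <= s -> piece s th n x <= rpow (npow n (- th)) s.
Proof.
  intros Hs. rewrite piece_trapezoid. apply rpow_le_compat; [exact Hs|].
  unfold trapezoid. eapply Rle_trans; [apply Rmin_l|apply Rmin_r].
Qed.

Lemma continuous_Rmin (f g : R -> R) x :
  continuous f x -> continuous g x -> continuous (fun y => Rmin (f y) (g y)) x.
Proof.
  intros Hf Hg. apply continuity_pt_filterlim in Hf, Hg. apply continuity_pt_filterlim.
  apply continuity_pt_ext with (fun y => (f y + g y - Rabs (f y - g y)) * / 2).
  { intros y. unfold Rmin. destruct (Rle_dec (f y) (g y)).
    - rewrite Rabs_left1 by lra. field.
    - rewrite Rabs_right by lra. field. }
  apply continuity_pt_mult; [|apply continuity_pt_const; intros ? ?; reflexivity].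
  apply continuity_pt_minus; [apply continuity_pt_plus; assumption|].
  apply (continuity_pt_comp (fun y => f y - g y) Rabs); [|apply Rcontinuity_abs].
  apply continuity_pt_minus; assumption.
Qed.

Lemma piece_continuous s th n x : 0 < s -> continuous (piece s th n) x.
Proof.
  intros Hs. apply continuous_ext with (fun y => rpow (trapezoid (a th n) (npow n (- th)) y) s).
  { intros y. symmetry. apply piece_trapezoid. }
  apply continuous_comp with (g := fun y => rpow y s); [|apply rpow_continuous, Hs].
  unfold trapezoid.
  repeat apply continuous_Rmin; try apply continuous_const.
  - apply (continuous_minus (fun y => y) (fun _ => a th n));
      [apply continuous_id|apply continuous_const].
  - apply (continuous_minus (fun _ => a th n + 3 * npow n (- th)) (fun y => y));
      [apply continuous_const|apply continuous_id].
Qed.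

Lemma piece_mul_exponent s th n x g :
  piece (g * s) th n x = rpow (piece s th n x) (g - 1) * piece s th n x.
Proof. rewrite !piece_trapezoid. apply rpow_mul_exponent. Qed.

Lemma w_eq_piece_near s th m y : 1 < th -> (1 <= m)%nat ->
  a th (S m) - npow m (- th) < y < a th (S (S m)) -> w s th y = piece s th (S m) y.
Proof.
  intros Hth Hm [Hl Hr]. pose proof (npow_gt0 m (- th)).
  destruct (Rle_lt_dec (a th (S m)) y) as [Hy|Hy]; [apply w_eq_piece; auto; lia|].
  (* left of [a (S m)] both sides vanish: [y] lies in the zero tail of block [m], or below 4 *)
  assert (Hpiece : piece s th (S m) y = 0).
  { unfold piece. pose proof (npow_gt0 (S m) (- th)).
    destruct (Rlt_dec y (a th (S m) + npow (S m) (- th))); [|lra].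
    apply rpow_eq_0. lra. }
  rewrite Hpiece.
  destruct (Rlt_le_dec y (a th 2)) as [H2|H2]; [apply w_eq_0; now left|].
  assert (Hm2 : (2 <= m)%nat) by (destruct m as [|[|m]]; [lia|lra|lia]).
  rewrite (a_succ th m) in Hl, Hy by lia.
  rewrite (w_eq_piece s th y m); [|assumption|assumption|rewrite (a_succ th m) by lia; lra].
  unfold piece.
  destruct (Rlt_dec y (a th m + npow m (- th))); [lra|].
  destruct (Rlt_dec y (a th m + 2 * npow m (- th))); [lra|].
  destruct (Rlt_dec y (a th m + 3 * npow m (- th))); [lra|reflexivity].
Qed.

Lemma w_ge0 s th x : 0 <= w s th x.
Proof.
  unfold w. destruct Rle_dec; [destruct Rlt_dec|]; try lra.
  rewrite piece_trapezoid. apply rpow_ge0.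
Qed.

Lemma w_le_tail s th M y : 0 <= s -> 1 < th -> a th M <= y ->
  w s th y <= rpow (ainf th - a th M) s.
Proof.
  intros Hs Hth HM.
  destruct (Rlt_le_dec y (a th 2)) as [H2|H2];
    [rewrite w_eq_0 by (now left); apply rpow_ge0|].
  destruct (Rlt_le_dec y (ainf th)) as [Hinf|Hinf];
    [|rewrite w_eq_0 by (now right); apply rpow_ge0].
  destruct (nsel_spec th y Hth (conj H2 Hinf)) as [Hn Hy].
  set (n := nsel th y) in *.
  rewrite (w_eq_piece s th y n) by assumption.
  eapply Rle_trans; [apply piece_le; lra|]. apply rpow_le_compat; [lra|].
  assert (HMn : (M <= n)%nat).
  { destruct (Nat.le_gt_cases M n) as [|Hlt]; [assumption|].
    pose proof (a_mono th (S n) M Hlt). lra. }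
  pose proof (a_mono th M n HMn). pose proof (a_lt_ainf th (S n) Hth).
  rewrite (a_succ th n) in * by lia. pose proof (npow_gt0 n (- th)). lra.
Qed.

Lemma w_continuous_ainf s th : 0 < s -> 1 < th -> continuous (w s th) (ainf th).
Proof.
  intros Hs Hth. apply filterlim_locally. intros eps.
  assert (Hroot : 0 < Rpower eps (/ s)) by apply exp_pos.
  destruct (a_exceeds th (ainf th - Rpower eps (/ s)) Hth ltac:(lra)) as [M HM].
  pose proof (a_lt_ainf th M Hth).
  exists (mkposreal (ainf th - a th M) ltac:(lra)). intros y Hy.
  change (Rabs (y - ainf th) < ainf th - a th M) in Hy.
  change (Rabs (w s th y - w s th (ainf th)) < eps).
  apply Rabs_def2 in Hy.
  rewrite (w_eq_0 s th (ainf th)) by (right; lra).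
  rewrite Rminus_0_r, Rabs_right by apply Rle_ge, w_ge0.
  eapply Rle_lt_trans; [apply (w_le_tail s th M y); lra|].
  apply rpow_lt_root; [exact Hs|apply cond_pos|lra].
Qed.

Lemma w_continuous s th x : 0 < s -> 1 < th -> continuous (w s th) x.
Proof.
  intros Hs Hth.
  destruct (Rlt_le_dec x (a th 2)) as [H2|H2].
  { apply continuous_ext_loc with (fun _ => 0); [|apply continuous_const].
    apply locally_interval with m_infty (a th 2); [exact I|exact H2|].
    intros y _ Hy. symmetry. apply w_eq_0. now left. }
  destruct (Rlt_le_dec x (ainf th)) as [Hinf|Hinf].
  { destruct (nsel_spec th x Hth (conj H2 Hinf)) as [Hn Hx].
    destruct (nsel th x) as [|m]; [lia|].
    apply continuous_ext_loc with (piece s th (S m)); [|apply piece_continuous, Hs].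
    pose proof (npow_gt0 m (- th)).
    apply locally_interval with (a th (S m) - npow m (- th)) (a th (S (S m)));
      simpl; [lra|lra|].
    intros y Hl Hr. symmetry. apply w_eq_piece_near; [assumption|lia|lra]. }
  destruct Hinf as [Hgt|Heq]; [|subst x; apply w_continuous_ainf; assumption].
  apply continuous_ext_loc with (fun _ => 0); [|apply continuous_const].
  apply locally_interval with (ainf th) p_infty; [exact Hgt|exact I|].
  intros y Hy _. symmetry. apply w_eq_0. right. simpl in Hy. lra.
Qed.

Lemma w_mul_exponent s th x g : w (g * s) th x = rpow (w s th x) (g - 1) * w s th x.
Proof.
  unfold w. destruct Rle_dec; [destruct Rlt_dec|];
    [apply piece_mul_exponent|rewrite rpow_eq_0 by lra; ring..].
Qed.

Lemma npow_le_2 th n : 0 <= th -> (2 <= n)%nat -> npow n (- th) <= Rpower 2 (- th).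
Proof.
  intros Hth Hn. unfold npow. rewrite !Rpower_Ropp.
  apply Rinv_le_contravar; [apply exp_pos|].
  apply Rle_Rpower_l; [exact Hth|split; [lra|]].
  replace 2 with (INR 2) by reflexivity. apply le_INR, Hn.
Qed.

Lemma w_le s th x : 0 <= s -> 1 < th -> w s th x <= Rpower 2 (- s * th).
Proof.
  intros Hs Hth.
  assert (Hpos : 0 < Rpower 2 (- s * th)) by apply exp_pos.
  destruct (Rlt_le_dec x (a th 2)) as [H2|H2]; [rewrite w_eq_0 by (now left); lra|].
  destruct (Rlt_le_dec x (ainf th)) as [Hinf|Hinf]; [|rewrite w_eq_0 by (now right); lra].
  destruct (nsel_spec th x Hth (conj H2 Hinf)) as [Hn Hx].
  rewrite (w_eq_piece s th x (nsel th x)) by assumption.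
  eapply Rle_trans; [apply piece_le; lra|].
  eapply Rle_trans; [apply rpow_le_compat, npow_le_2; [lra|lra|exact Hn]|].
  rewrite rpow_eq_Rpower by apply exp_pos. rewrite Rpower_mult.
  right. f_equal. ring.
Qed.

Lemma w_support s th x : in_support (w s th) x -> 4 <= x <= 4 * zeta th.
Proof.
  intros Hsupp. split.
  - destruct (Rlt_le_dec x 4) as [Hx|Hx]; [exfalso|exact Hx].
    destruct (Hsupp (4 - x) ltac:(lra)) as [y [Hy Hwy]].
    apply Rabs_def2 in Hy. apply Hwy, w_eq_0. left. rewrite a_2. lra.
  - destruct (Rlt_le_dec (4 * zeta th) x) as [Hx|Hx]; [exfalso|exact Hx].
    destruct (Hsupp (x - 4 * zeta th) ltac:(lra)) as [y [Hy Hwy]].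
    apply Rabs_def2 in Hy. apply Hwy, w_eq_0. right. unfold ainf. lra.
Qed.

Definition C1_at (f : R -> R) (x : R) : Prop :=
  ex_derive f x /\ continuous (Derive f) x.

Lemma C1_at_is_derive f D x l r : l < x < r ->
  (forall y, l < y < r -> is_derive f y (D y)) -> ex_derive D x -> C1_at f x.
Proof.
  intros Hx Hf HD. split; [exists (D x); apply Hf, Hx|].
  apply continuous_ext_loc with D.
  - apply locally_interval with l r; simpl; try lra.
    intros y Hl Hr. symmetry. apply is_derive_unique, Hf. lra.
  - apply (@ex_derive_continuous R_AbsRing R_NormedModule), HD.
Qed.

Lemma C1_at_ext f g x l r : l < x < r ->
  (forall y, l < y < r -> f y = g y) -> C1_at g x -> C1_at f x.
Proof.
  intros Hx Hfg [Hg HDg].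
  assert (Hloc : forall y, l < y < r -> locally y (fun z => g z = f z)).
  { intros y Hy. apply locally_interval with l r; simpl; try lra.
    intros z Hl Hr. symmetry. apply Hfg. lra. }
  split; [apply ex_derive_ext_loc with g; [apply Hloc, Hx|exact Hg]|].
  apply continuous_ext_loc with (Derive g); [|exact HDg].
  apply locally_interval with l r; simpl; try lra.
  intros y Hl Hr. apply Derive_ext_loc, Hloc. lra.
Qed.

Lemma C1_at_const c x : C1_at (fun _ => c) x.
Proof.
  apply (C1_at_is_derive _ (fun _ => 0) x (x - 1) (x + 1)); [lra| |].
  - intros y _. auto_derive; trivial.
  - auto_derive; trivial.
Qed.

Lemma C1_at_rpow_sub_r s c x : c < x -> C1_at (fun y => rpow (y - c) s) x.
Proof.
  intros Hx.
  apply (C1_at_ext _ (fun y => exp (s * ln (y - c))) x c (x + 1)); [lra| |].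
  { intros y Hy. apply rpow_eq_Rpower. lra. }
  apply (C1_at_is_derive _ (fun y => s * / (y - c) * exp (s * ln (y - c))) x c (x + 1));
    [lra| |].
  - intros y Hy. auto_derive; [lra|]. unfold Rminus. ring.
  - auto_derive. repeat split; lra.
Qed.

Lemma C1_at_rpow_sub_l s c x : x < c -> C1_at (fun y => rpow (c - y) s) x.
Proof.
  intros Hx.
  apply (C1_at_ext _ (fun y => exp (s * ln (c - y))) x (x - 1) c); [lra| |].
  { intros y Hy. apply rpow_eq_Rpower. lra. }
  apply (C1_at_is_derive _ (fun y => - (s * / (c - y) * exp (s * ln (c - y)))) x (x - 1) c);
    [lra| |].
  - intros y Hy. auto_derive; [lra|]. unfold Rminus. ring.
  - auto_derive. repeat split; lra.
Qed.

Lemma piece_C1_at s th n x :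
  (forall k, (k <= 3)%nat -> x <> a th n + INR k * npow n (- th)) ->
  C1_at (piece s th n) x.
Proof.
  intros Hbreak.
  pose proof (Hbreak 0%nat ltac:(lia)) as K0. pose proof (Hbreak 1%nat ltac:(lia)) as K1.
  pose proof (Hbreak 2%nat ltac:(lia)) as K2. pose proof (Hbreak 3%nat ltac:(lia)) as K3.
  simpl INR in K0, K1, K2, K3.
  set (c := a th n) in *. set (h := npow n (- th)) in *.
  assert (Hh : 0 < h) by apply npow_gt0.
  assert (Hpiece : forall y, piece s th n y =
    if Rlt_dec y (c + h) then rpow (y - c) s
    else if Rlt_dec y (c + 2 * h) then npow n (- th * s)
    else if Rlt_dec y (c + 3 * h) then rpow (c + 3 * h - y) s else 0) by reflexivity.
  destruct (Rlt_le_dec x c) as [C0|C0].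
  { apply (C1_at_ext _ (fun _ => 0) x (x - 1) c); [lra| |apply C1_at_const].
    intros y Hy. rewrite Hpiece. destruct Rlt_dec; [apply rpow_eq_0|]; lra. }
  destruct (Rlt_le_dec x (c + h)) as [C1|C1].
  { apply (C1_at_ext _ (fun y => rpow (y - c) s) x c (c + h));
      [lra| |apply C1_at_rpow_sub_r; lra].
    intros y Hy. rewrite Hpiece. destruct Rlt_dec; [reflexivity|lra]. }
  destruct (Rlt_le_dec x (c + 2 * h)) as [C2|C2].
  { apply (C1_at_ext _ (fun _ => npow n (- th * s)) x (c + h) (c + 2 * h));
      [lra| |apply C1_at_const].
    intros y Hy. rewrite Hpiece. do 2 (destruct Rlt_dec; try lra). }
  destruct (Rlt_le_dec x (c + 3 * h)) as [C3|C3].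
  { apply (C1_at_ext _ (fun y => rpow (c + 3 * h - y) s) x (c + 2 * h) (c + 3 * h));
      [lra| |apply C1_at_rpow_sub_l; lra].
    intros y Hy. rewrite Hpiece. do 3 (destruct Rlt_dec; try lra). }
  apply (C1_at_ext _ (fun _ => 0) x (c + 3 * h) (x + 1)); [lra| |apply C1_at_const].
  intros y Hy. rewrite Hpiece. do 3 (destruct Rlt_dec; try lra).
Qed.

Lemma w_C1_at s th x : 1 < th -> ~ Ptheta th x -> C1_at (w s th) x.
Proof.
  intros Hth HP.
  destruct (Rlt_le_dec x (a th 2)) as [H2|H2].
  { apply (C1_at_ext _ (fun _ => 0) x (x - 1) (a th 2)); [lra| |apply C1_at_const].
    intros y Hy. apply w_eq_0. left. lra. }
  destruct (Rlt_le_dec x (ainf th)) as [Hinf|Hinf].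
  2: { assert (Hgt : ainf th < x).
       { destruct Hinf as [Hlt|Heq]; [exact Hlt|]. exfalso. apply HP. right. now symmetry. }
       apply (C1_at_ext _ (fun _ => 0) x (ainf th) (x + 1)); [lra| |apply C1_at_const].
       intros y Hy. apply w_eq_0. right. lra. }
  destruct (nsel_spec th x Hth (conj H2 Hinf)) as [Hn Hx].
  set (n := nsel th x) in *.
  assert (Hbreak : forall k, (k <= 3)%nat -> x <> a th n + INR k * npow n (- th)).
  { intros k Hk Hxk. apply HP. left. split; [lra|]. exists n, k. auto. }
  assert (Hcn : a th n < x).
  { destruct (proj1 Hx) as [Hlt|Heq]; [exact Hlt|].
    exfalso. apply (Hbreak 0%nat); [lia|]. simpl. lra. }
  apply (C1_at_ext _ (piece s th n) x (a th n) (a th (S n)));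
    [lra| |apply piece_C1_at, Hbreak].
  intros y Hy. apply w_eq_piece; [exact Hth|exact Hn|lra].
Qed.

Definition Ptheta_enum (th : R) (m : nat) : R :=
  match m with
  | O => ainf th
  | S m => a th (m / 4) + INR (m mod 4) * npow (m / 4) (- th)
  end.

Lemma Ptheta_enum_surj th x : Ptheta th x -> exists m, Ptheta_enum th m = x.
Proof.
  intros [[_ [n [k [_ [Hk Hx]]]]]|Hx].
  - exists (S (4 * n + k)).
    change (a th ((4 * n + k) / 4) + INR ((4 * n + k) mod 4) * npow ((4 * n + k) / 4) (- th)
            = x).
    rewrite <- (Nat.div_unique (4 * n + k) 4 n k), <- (Nat.mod_unique (4 * n + k) 4 n k)
      by lia.
    now symmetry.
  - exists O. now symmetry.
Qed.

Theorem lemma2p1 (sigma theta : R) (Hsigma : 0 < sigma) (Htheta : 1 < theta) :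
  (* (i) continuity, and compact support contained in [4, 4 zeta(theta)] *)
  ((forall xi : R, continuous (w sigma theta) xi) /\
   (forall xi : R, in_support (w sigma theta) xi -> 4 <= xi <= 4 * zeta theta)) /\
  (* (ii) P_theta countable; w is C^1 on R \ P_theta *)
  ((exists f : nat -> R, forall xi, Ptheta theta xi -> exists k : nat, f k = xi) /\
   (forall xi : R, ~ Ptheta theta xi ->
      ex_derive (w sigma theta) xi /\ continuous (Derive (w sigma theta)) xi)) /\
  (* (iii) *)
  (forall gamma : R, 0 < gamma -> forall xi : R,
      w (gamma * sigma) theta xi
      = rpow (w sigma theta xi) (gamma - 1) * w sigma theta xi) /\
  (* (iv) *)
  (forall xi : R, 0 <= w sigma theta xi <= Rpower 2 (- sigma * theta)).
Proof.
  split; [split|split; [split|split]].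
  - intros xi. apply w_continuous; assumption.
  - intros xi. apply w_support.
  - exists (Ptheta_enum theta). apply Ptheta_enum_surj.
  - intros xi HP. apply w_C1_at; assumption.
  - intros gamma _ xi. apply w_mul_exponent.
  - intros xi. split; [apply w_ge0|apply w_le; [lra|assumption]].
Qed.
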